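(* Let $f$ be analytic on $\mathbb{D}$ with $f(z)=z+\sum_{n=2}^{\infty}a_nz^n$ and $\operatorname{Re}f'(z)>0$ for all $z\in\mathbb{D}$, and let $\gamma_1=\frac12a_2$, $\gamma_2=\frac12\left(a_3-\frac12a_2^2\right)$. Then $$-\frac{1}{\sqrt5}\le|\gamma_2|-|\gamma_1|\le\frac13.$$ Both inequalities are sharp.
   Context: $\mathbb{D}=\{z\in\mathbb{C}:|z|<1\}$. The class of such $f$ is the class $\mathcal{R}$ of functions of bounded turning. $\gamma_1,\gamma_2$ are the first two logarithmic coefficients, defined by $\log\frac{f(z)}{z}=2\sum_{n\ge1}\gamma_nz^n$ near $0$. *)

From Stdlib Require Import Reals.
From Coquelicot Require Import Coquelicot.

Open Scope R_scope.

Definition unit_disk (z : C) : Prop := Cmod z < 1.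

Definition normalized_analytic (f : C -> C) (a : nat -> C) : Prop :=
  a 0%nat = RtoC 0 /\ a 1%nat = RtoC 1 /\
  forall z : C, unit_disk z -> is_series (fun n : nat => (a n * z ^ n)%C) (f z).

Definition bounded_turning (f : C -> C) : Prop :=
  forall z : C, unit_disk z ->
    exists l : C, is_derive (K := C_AbsRing) (V := C_NormedModule) f z l /\ 0 < Re l.

Definition in_class_R (f : C -> C) (a : nat -> C) : Prop :=
  normalized_analytic f a /\ bounded_turning f.

(* First two logarithmic coefficients, via log(f(z)/z) = 2 sum gamma_n z^n. *)
Definition gamma1 (a : nat -> C) : C := (/ 2 * a 2%nat)%C.
Definition gamma2 (a : nat -> C) : C := (/ 2 * (a 3%nat - / 2 * (a 2%nat * a 2%nat)))%C.

Definition logcoef_diff (a : nat -> C) : R := Cmod (gamma2 a) - Cmod (gamma1 a).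

(* Write [f'(z) = p(z) = sum c_n z^n] with [c_n = (n + 1) a_(n+1)], so [c_0 = 1] and
   [Re p > 0] on the disk.  Averaging [p(r x) |u0 + u1 x + u2 x^2|^2] over the [N]-th roots of
   unity [x] (for [N] large and [r < 1]) shows that the Toeplitz form
   [sum u_j conj(u_l) c_(l-j) r^(l-j)] has nonnegative real part; a suitable choice of [u]
   turns this into the sharpened Caratheodory inequality [|c2 - c1^2/2| + |c1|^2/2 <= 2].
   As [gamma1 = c1/4] and [gamma2 = (c2 - c1^2/2)/6 + c1^2/48], both bounds then reduce to an
   inequality between the real numbers [|c1|] and [|c2 - c1^2/2|].  Equality is attained by
   [f'(z) = 1/(1 - e1 z) + 1/(1 - e2 z) - 1] with [(e1, e2) = (1, -1)], resp.
   [e1 = conj e2 = (2 + i)/sqrt 5]. *)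

From Stdlib Require Import Reals Lra Lia ClassicalEpsilon.
From Coquelicot Require Import Coquelicot.
Open Scope R_scope.

(* [ring] only recognises the carrier when it is syntactically [C], not one of the Coquelicot
   structure projections it is often displayed as. *)
Ltac Cring := match goal with |- ?x = ?y => change (@eq C x y) end; ring.

Lemma is_series_Cmod_le (u : nat -> C) (b : nat -> R) (s : C) (t : R) :
  is_series u s -> is_series b t -> (forall n, Cmod (u n) <= b n) -> Cmod s <= t.
Proof.
  intros Hu Hb Hle.
  apply (is_lim_seq_le (fun n => Cmod (sum_n u n)) (sum_n b) (Cmod s) t).
  - intros n. eapply Rle_trans; [apply (norm_sum_n_m u 0 n)|]. now apply sum_n_m_le.
  - eapply filterlim_comp; [exact Hu | apply (filterlim_norm (K := C_AbsRing) s)].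
  - exact Hb.
Qed.

Lemma is_series_terms_bounded (u : nat -> C) (s : C) :
  is_series u s -> exists M, forall n, Cmod (u n) <= M.
Proof.
  intros Hu.
  destruct (filterlim_bounded (K := C_AbsRing) (sum_n u)) as [M HM]; [now exists s|].
  exists (2 * M). intros [|n].
  - pose proof (HM 0%nat) as H0. rewrite sum_O in H0.
    pose proof (Cmod_ge_0 (u 0%nat)). change norm with Cmod in H0. lra.
  - pose proof (HM n) as H1. pose proof (HM (S n)) as H2. rewrite sum_Sn in H2.
    change norm with Cmod in H1, H2. change plus with Cplus in H2.
    replace (u (S n)) with ((sum_n u n + u (S n)) + - sum_n u n)%C by ring.
    eapply Rle_trans; [apply Cmod_triangle|]. rewrite Cmod_opp. lra.
Qed.

(* The sum of a convergent complex series (an arbitrary value if it diverges). *)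
Definition CSeries (u : nat -> C) : C :=
  epsilon (inhabits (RtoC 0)) (fun l : C => is_series u l).

Lemma CSeries_correct (u : nat -> C) (l : C) : is_series u l -> CSeries u = l.
Proof.
  intros Hl.
  assert (Hs : is_series u (CSeries u)) by (unfold CSeries; apply epsilon_spec; now exists l).
  exact (filterlim_locally_unique (K := C_AbsRing) (V := C_NormedModule) _ _ _ Hs Hl).
Qed.

Lemma succ_mul_pow_le (t : R) (n : nat) : 0 < t < 1 ->
  (INR n + 1) * t ^ n * (t * (1 - t)) <= 1.
Proof.
  intros Ht. induction n as [|n IH]; [simpl; nra|].
  rewrite S_INR. simpl (t ^ S n).
  assert (0 <= t ^ n) by (apply pow_le; lra).
  assert (t ^ n <= 1) by (rewrite <- (pow1 n); apply pow_incr; lra).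
  assert (t * ((INR n + 1) * t ^ n * (t * (1 - t))) <= t) by nra.
  assert (t * t ^ n <= 1) by nra.
  assert (t * t ^ n * t <= 1) by nra.
  assert (t * t ^ n * (t * (1 - t)) <= 1 - t) by nra.
  nra.
Qed.

Lemma ex_series_sq_geom (q : R) : 0 <= q < 1 ->
  ex_series (fun n => (INR n + 1) ^ 2 * q ^ n).
Proof.
  (* With [q <= t^3]: [(n+1)^2 q^n <= ((n+1) t^n)^2 t^n], and [(n+1) t^n] is bounded. *)
  intros Hq. set (t := (2 + q) / 3).
  assert (Ht : 0 < t < 1) by (unfold t; lra).
  assert (Hqt : q <= t ^ 3).
  { replace (t ^ 3) with (q + (1 - q) ^ 2 * (q + 8) / 27) by (unfold t; field).
    assert (0 <= (1 - q) ^ 2) by apply pow2_ge_0. nra. }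
  assert (Hd : 0 < t * (1 - t)) by nra.
  apply (ex_series_le (V := R_CompleteNormedModule) _ (fun n => / (t * (1 - t)) ^ 2 * t ^ n)).
  - intros n. change norm with Rabs.
    set (X := (INR n + 1) * t ^ n).
    assert (HX0 : 0 <= X) by (apply Rmult_le_pos; [pose proof (pos_INR n); lra|apply pow_le; lra]).
    assert (HX : X * (t * (1 - t)) <= 1) by apply succ_mul_pow_le, Ht.
    assert (Htn : 0 <= t ^ n) by (apply pow_le; lra).
    assert (Hqn : q ^ n <= t ^ n * t ^ n * t ^ n).
    { rewrite <- !Rpow_mult_distr. apply pow_incr. simpl in Hqt |- *. lra. }
    assert (HX2 : X ^ 2 <= / (t * (1 - t)) ^ 2).
    { apply Rmult_le_reg_r with ((t * (1 - t)) ^ 2); [apply pow_lt; lra|].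
      rewrite Rinv_l by (apply pow_nonzero; lra). rewrite <- Rpow_mult_distr.
      rewrite <- (pow1 2). apply pow_incr. nra. }
    rewrite Rabs_pos_eq by (apply Rmult_le_pos; [apply pow2_ge_0|apply pow_le; lra]).
    apply Rle_trans with (X ^ 2 * t ^ n).
    + unfold X. assert (0 <= (INR n + 1) ^ 2) by apply pow2_ge_0.
      replace (((INR n + 1) * t ^ n) ^ 2 * t ^ n)
        with ((INR n + 1) ^ 2 * (t ^ n * t ^ n * t ^ n)) by ring.
      apply Rmult_le_compat_l; lra.
    + apply Rmult_le_compat_r; lra.
  - apply (ex_series_scal_l (K := R_AbsRing) (V := R_NormedModule) _ (fun n => t ^ n)).
    apply ex_series_geom. rewrite Rabs_pos_eq; lra.
Qed.

Definition deriv_coef (a : nat -> C) (n : nat) : C := (INR (S n) * a (S n))%C.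

Definition pow_rem (w z : C) (n : nat) : C :=
  (w ^ S n - z ^ S n - INR (S n) * z ^ n * (w - z))%C.

Lemma pow_rem_S (w z : C) (n : nat) :
  pow_rem w z (S n) = (w * pow_rem w z n + INR (S n) * z ^ n * (w - z) * (w - z))%C.
Proof. unfold pow_rem. rewrite (S_INR (S n)), RtoC_plus. simpl. ring. Qed.

Lemma pow_rem_bound (w z : C) (rho : R) (n : nat) :
  0 < rho -> Cmod w <= rho -> Cmod z <= rho ->
  rho * Cmod (pow_rem w z n) <= INR n ^ 2 * rho ^ n * Cmod (w - z) ^ 2.
Proof.
  intros Hr Hw Hz. induction n as [|n IH].
  - replace (pow_rem w z 0) with (RtoC 0) by (unfold pow_rem; simpl; ring).
    rewrite Cmod_0. simpl. lra.
  - rewrite pow_rem_S.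
    assert (Hh := Cmod_ge_0 (w - z)). assert (HE := Cmod_ge_0 (pow_rem w z n)).
    assert (Hzn : Cmod z ^ n <= rho ^ n) by (apply pow_incr; split; [apply Cmod_ge_0|exact Hz]).
    assert (Hrn : 0 <= rho ^ n) by (apply pow_le; lra).
    assert (Hn := pos_INR n).
    eapply Rle_trans; [apply Rmult_le_compat_l; [lra|apply Cmod_triangle]|].
    rewrite !Cmod_mult, Cmod_pow, Cmod_R, Rabs_pos_eq by apply pos_INR.
    rewrite S_INR.
    set (h2 := Cmod (w - z) ^ 2) in *. set (E := Cmod (pow_rem w z n)) in *.
    assert (Hh2 : 0 <= h2) by apply pow2_ge_0.
    assert (A : Cmod w * (rho * E) <= rho * (INR n ^ 2 * rho ^ n * h2)).
    { apply Rmult_le_compat; [apply Cmod_ge_0|nra|exact Hw|exact IH]. }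
    assert (B : (INR n + 1) * Cmod z ^ n * h2 <= (INR n + 1) * rho ^ n * h2).
    { apply Rmult_le_compat_r; [exact Hh2|]. apply Rmult_le_compat_l; lra. }
    replace ((INR n + 1) * Cmod z ^ n * Cmod (w - z) * Cmod (w - z))
      with ((INR n + 1) * Cmod z ^ n * h2) by (unfold h2; ring).
    apply Rle_trans with (rho * (INR n ^ 2 * rho ^ n * h2) + rho * ((INR n + 1) * rho ^ n * h2)).
    + rewrite Rmult_plus_distr_l. apply Rplus_le_compat; [lra|].
      apply Rmult_le_compat_l; lra.
    + assert (0 <= rho * rho ^ n * h2) by (apply Rmult_le_pos; nra).
      simpl. nra.
Qed.

Lemma is_derive_of_sq_bound (g : C -> C) (z l : C) (c delta : R) : 0 < delta ->
  (forall w, Cmod (w - z) < delta -> Cmod (g w - g z - (w - z) * l) <= c * Cmod (w - z) ^ 2) ->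
  is_derive (K := C_AbsRing) (V := C_NormedModule) g z l.
Proof.
  intros Hdelta Hg. split; [apply is_linear_scal_l|].
  intros x Hx eps. rewrite <- (is_filter_lim_locally_unique _ _ Hx).
  assert (Hc := Rabs_pos c).
  assert (Hr : 0 < Rmin delta (eps / (Rabs c + 1))).
  { apply Rmin_pos; [lra|]. apply Rdiv_lt_0_compat; [apply cond_pos|lra]. }
  apply filter_imp with (@ball_norm C_AbsRing (AbsRing_NormedModule C_AbsRing) z (mkposreal _ Hr));
    [|apply (@locally_ball_norm C_AbsRing (AbsRing_NormedModule C_AbsRing))].
  intros w Hw. unfold ball_norm in Hw. simpl in Hw. change norm with Cmod in Hw |- *.
  change minus with Cminus in Hw |- *. change scal with Cmult.
  assert (Hw1 : Cmod (w - z) < delta) by (eapply Rlt_le_trans; [exact Hw|apply Rmin_l]).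
  assert (Hw2 : Cmod (w - z) < eps / (Rabs c + 1))
    by (eapply Rlt_le_trans; [exact Hw|apply Rmin_r]).
  assert (Hh := Cmod_ge_0 (w - z)).
  assert (Hce : Rabs c * Cmod (w - z) <= eps).
  { apply Rle_trans with ((Rabs c + 1) * (eps / (Rabs c + 1))); [nra|].
    right. field. lra. }
  eapply Rle_trans; [apply Hg, Hw1|].
  pose proof (Rle_abs c). simpl. nra.
Qed.

Section PowerSeries.

Variables (a : nat -> C) (g : C -> C).
Hypothesis Hg : forall z, unit_disk z -> is_series (fun n => (a n * z ^ n)%C) (g z).

Lemma coef_pow_bounded (r : R) : 0 <= r < 1 -> exists M, forall n, Cmod (a n) * r ^ n <= M.
Proof.
  intros Hr.
  assert (Hd : unit_disk (RtoC r)) by (unfold unit_disk; rewrite Cmod_R, Rabs_pos_eq; lra).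
  destruct (is_series_terms_bounded _ _ (Hg _ Hd)) as [M HM].
  exists M. intros n. specialize (HM n).
  now rewrite Cmod_mult, <- RtoC_pow, Cmod_R, Rabs_pos_eq in HM by (apply pow_le; lra).
Qed.

Lemma ex_series_coef_weighted (rho : R) : 0 <= rho < 1 ->
  ex_series (fun n => (INR n + 1) ^ 2 * (Cmod (a (S n)) * rho ^ n)).
Proof.
  intros Hrho. set (r := (1 + rho) / 2).
  destruct (coef_pow_bounded r) as [M HM]; [unfold r; lra|].
  assert (Hr : 0 < r) by (unfold r; lra).
  apply (ex_series_le (V := R_CompleteNormedModule) _
           (fun n => M / r * ((INR n + 1) ^ 2 * (rho / r) ^ n))).
  - intros n. change norm with Rabs.
    assert (Hsq := pow2_ge_0 (INR n + 1)).
    assert (Han := Cmod_ge_0 (a (S n))).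
    assert (Hrn : 0 <= rho ^ n) by (apply pow_le; lra).
    rewrite Rabs_pos_eq by (apply Rmult_le_pos; [lra|nra]).
    replace (M / r * ((INR n + 1) ^ 2 * (rho / r) ^ n))
      with ((INR n + 1) ^ 2 * (M * (rho ^ n / r ^ S n)))
      by (assert (r ^ n <> 0) by (apply pow_nonzero; lra);
          unfold Rdiv; rewrite Rpow_mult_distr, pow_inv; simpl; field; lra).
    apply Rmult_le_compat_l; [lra|].
    assert (Hrsn : 0 < r ^ S n) by (apply pow_lt; lra).
    replace (Cmod (a (S n)) * rho ^ n) with (Cmod (a (S n)) * r ^ S n * (rho ^ n / r ^ S n))
      by (field; lra).
    apply Rmult_le_compat_r; [apply Rdiv_le_0_compat; lra|apply HM].
  - apply (ex_series_scal_l (K := R_AbsRing) (V := R_NormedModule) _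
             (fun n => (INR n + 1) ^ 2 * (rho / r) ^ n)), ex_series_sq_geom.
    split; [apply Rdiv_le_0_compat; lra|]. apply Rmult_lt_reg_r with r; [lra|].
    unfold Rdiv. rewrite Rmult_assoc, Rinv_l; unfold r; lra.
Qed.

Lemma ex_series_deriv_coef_abs (r : R) : 0 <= r < 1 ->
  ex_series (fun n => Cmod (deriv_coef a n) * r ^ n).
Proof.
  intros Hr.
  refine (ex_series_le (V := R_CompleteNormedModule) _ _ _ (ex_series_coef_weighted r Hr)).
  intros n. change norm with Rabs. unfold deriv_coef.
  rewrite Cmod_mult, Cmod_R, (Rabs_pos_eq (INR (S n))), S_INR by apply pos_INR.
  assert (HX : 0 <= Cmod (a (S n)) * r ^ n)
    by (apply Rmult_le_pos; [apply Cmod_ge_0|apply pow_le; lra]).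
  assert (Hn := pos_INR n).
  rewrite Rmult_assoc, Rabs_pos_eq by nra. nra.
Qed.

Lemma ex_series_deriv (z : C) : unit_disk z -> ex_series (fun n => (deriv_coef a n * z ^ n)%C).
Proof.
  intros Hz.
  refine (ex_series_le (V := C_CompleteNormedModule) _ _ _
           (ex_series_deriv_coef_abs (Cmod z) (conj (Cmod_ge_0 z) Hz))).
  intros n. change norm with Cmod. now rewrite Cmod_mult, Cmod_pow.
Qed.

Lemma is_series_pow_rem (w z p : C) : unit_disk w -> unit_disk z ->
  is_series (fun n => (deriv_coef a n * z ^ n)%C) p ->
  is_series (fun n => (a (S n) * pow_rem w z n)%C) (g w - g z - (w - z) * p)%C.
Proof.
  intros Hw Hz Hp.
  assert (Hshift : forall x, unit_disk x ->
            is_series (fun n => (a (S n) * x ^ S n)%C) (g x - a 0%nat)%C).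
  { intros x Hx. apply (is_series_incr_1 (fun n => (a n * x ^ n)%C)). change plus with Cplus.
    replace (g x - a 0%nat + a 0%nat * x ^ 0)%C with (g x) by (simpl; ring). now apply Hg. }
  pose proof (is_series_minus _ _ _ _ (is_series_minus _ _ _ _ (Hshift w Hw) (Hshift z Hz))
                (is_series_scal (K := C_AbsRing) (w - z)%C _ _ Hp)) as H.
  replace (g w - g z - (w - z) * p)%C
    with (g w - a 0%nat + - (g z - a 0%nat) + - ((w - z) * p))%C by Cring.
  refine (is_series_ext _ _ _ _ H).
  intros n. unfold pow_rem, deriv_coef. change plus with Cplus. change opp with Copp.
  change scal with Cmult. simpl. Cring.
Qed.

Lemma is_derive_power_series (z p : C) : unit_disk z ->
  is_series (fun n => (deriv_coef a n * z ^ n)%C) p ->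
  is_derive (K := C_AbsRing) (V := C_NormedModule) g z p.
Proof.
  intros Hz Hp. unfold unit_disk in Hz.
  set (rho := (1 + Cmod z) / 2).
  assert (Hrho : 0 < rho < 1) by (unfold rho; pose proof (Cmod_ge_0 z); lra).
  set (v := fun n => (INR n + 1) ^ 2 * (Cmod (a (S n)) * rho ^ n)).
  assert (Hv : is_series v (Series v))
    by (apply Series_correct, ex_series_coef_weighted; lra).
  apply (is_derive_of_sq_bound g z p (Series v / rho) ((1 - Cmod z) / 2)); [lra|].
  intros w Hw.
  assert (Hwr : Cmod w <= rho).
  { replace w with ((w - z) + z)%C by ring. eapply Rle_trans; [apply Cmod_triangle|].
    unfold rho. lra. }
  unfold Rdiv. rewrite Rmult_assoc.
  apply (is_series_Cmod_le _ (fun n => v n * (/ rho * Cmod (w - z) ^ 2)) _ _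
           (is_series_pow_rem w z p ltac:(unfold unit_disk; lra) Hz Hp)
           (is_series_scal_r _ _ _ Hv)).
  intros n. rewrite Cmod_mult. unfold v.
  assert (HR := pow_rem_bound w z rho n ltac:(lra) Hwr ltac:(unfold rho; lra)).
  assert (Han := Cmod_ge_0 (a (S n))). assert (Hn := pos_INR n).
  assert (Hrn : 0 <= rho ^ n) by (apply pow_le; lra).
  assert (Hh := pow2_ge_0 (Cmod (w - z))).
  apply Rmult_le_reg_l with rho; [lra|].
  apply Rle_trans with (Cmod (a (S n)) * (INR n ^ 2 * rho ^ n * Cmod (w - z) ^ 2)).
  { rewrite <- Rmult_assoc, (Rmult_comm rho), Rmult_assoc. now apply Rmult_le_compat_l. }
  replace (rho * ((INR n + 1) ^ 2 * (Cmod (a (S n)) * rho ^ n) * (/ rho * Cmod (w - z) ^ 2)))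
    with ((INR n + 1) ^ 2 * (Cmod (a (S n)) * rho ^ n * Cmod (w - z) ^ 2)) by (field; lra).
  replace (Cmod (a (S n)) * (INR n ^ 2 * rho ^ n * Cmod (w - z) ^ 2))
    with (INR n ^ 2 * (Cmod (a (S n)) * rho ^ n * Cmod (w - z) ^ 2)) by ring.
  apply Rmult_le_compat_r; [apply Rmult_le_pos; nra|]. apply pow_incr. lra.
Qed.

End PowerSeries.

Definition deriv_series (a : nat -> C) (z : C) : C :=
  CSeries (fun n => (deriv_coef a n * z ^ n)%C).

Lemma deriv_series_spec (f : C -> C) (a : nat -> C) (z : C) : in_class_R f a -> unit_disk z ->
  is_series (fun n => (deriv_coef a n * z ^ n)%C) (deriv_series a z) /\
  0 < Re (deriv_series a z).
Proof.
  intros [[_ [_ Hs]] Hb] Hz.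
  destruct (ex_series_deriv a f Hs z Hz) as [p Hp].
  unfold deriv_series. rewrite (CSeries_correct _ _ Hp). split; [exact Hp|].
  destruct (Hb z Hz) as [l [Hl Hre]].
  apply is_C_derive_unique in Hl.
  rewrite <- (is_C_derive_unique _ _ _ (is_derive_power_series a f Hs z p Hz Hp)), Hl.
  exact Hre.
Qed.

Definition cis (x : R) : C := (cos x, sin x).

Lemma cis_add (x y : R) : (cis x * cis y)%C = cis (x + y).
Proof. unfold cis, Cmult. simpl. rewrite cos_plus, sin_plus. f_equal; ring. Qed.

Lemma cis_pow (x : R) (n : nat) : (cis x ^ n)%C = cis (INR n * x).
Proof.
  induction n as [|n IH].
  - unfold cis. simpl. now rewrite Rmult_0_l, cos_0, sin_0.
  - rewrite Cpow_S, IH, Cmult_comm, cis_add, S_INR. f_equal. ring.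
Qed.

Lemma cis_mul_conj (x : R) : (cis x * Cconj (cis x))%C = 1.
Proof.
  pose proof (sin2_cos2 x) as H. unfold Rsqr in H.
  unfold cis, Cconj, Cmult. apply injective_projections; simpl; lra.
Qed.

Lemma Cmod_cis (x : R) : Cmod (cis x) = 1.
Proof.
  pose proof (sin2_cos2 x) as H. unfold Rsqr in H.
  unfold Cmod, cis. simpl. rewrite !Rmult_1_r, Rplus_comm, H. apply sqrt_1.
Qed.

Definition root_unity (K : nat) : C := cis (2 * PI / INR (S K)).

Lemma root_unity_pow (K d : nat) : (root_unity K ^ d)%C = cis (2 * PI * INR d / INR (S K)).
Proof. unfold root_unity. rewrite cis_pow. f_equal. field. apply not_0_INR. lia. Qed.

Lemma root_unity_pow_order (K : nat) : (root_unity K ^ S K)%C = 1.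
Proof.
  rewrite root_unity_pow. replace (2 * PI * INR (S K) / INR (S K)) with (2 * PI).
  - unfold cis. now rewrite cos_2PI, sin_2PI.
  - field. apply not_0_INR. lia.
Qed.

Lemma root_unity_pow_neq1 (K d : nat) : (0 < d < S K)%nat -> (root_unity K ^ d)%C <> 1.
Proof.
  intros Hd. rewrite root_unity_pow. unfold cis. intros E.
  set (x := 2 * PI * INR d / INR (S K)) in E.
  assert (Hc : cos x = 1) by exact (f_equal fst E).
  assert (Hs : sin x = 0) by exact (f_equal snd E).
  assert (HN : 0 < INR (S K)) by (apply lt_0_INR; lia).
  assert (Hdp : 0 < INR d) by (apply lt_0_INR; lia).
  assert (HdN : INR d < INR (S K)) by (apply lt_INR; lia).
  pose proof PI_RGT_0 as Hpi.
  assert (Hx0 : 0 < x) by (unfold x; apply Rdiv_lt_0_compat; nra).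
  assert (Hx1 : x < 2 * PI).
  { unfold x. apply Rmult_lt_reg_r with (INR (S K)); [exact HN|].
    unfold Rdiv. rewrite Rmult_assoc, Rinv_l by lra. nra. }
  destruct (Rtotal_order x PI) as [Hlt|[Heq|Hgt]].
  - pose proof (sin_gt_0 x Hx0 Hlt). lra.
  - rewrite Heq, cos_PI in Hc. lra.
  - pose proof (sin_lt_0 x Hgt Hx1). lra.
Qed.

Lemma Cmod_root_unity_pow (K k : nat) : Cmod (root_unity K ^ k) = 1.
Proof. rewrite root_unity_pow. apply Cmod_cis. Qed.

Lemma Cgeom_sum (q : C) (K : nat) : ((q - 1) * sum_n (fun k => q ^ k) K)%C = (q ^ S K - 1)%C.
Proof.
  induction K as [|K IH].
  - rewrite sum_O. simpl. ring.
  - rewrite sum_Sn. change plus with Cplus. rewrite Cmult_plus_distr_l, IH. simpl. ring.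
Qed.

Lemma sum_n_Cconj (u : nat -> C) (K : nat) : sum_n (fun k => Cconj (u k)) K = Cconj (sum_n u K).
Proof.
  induction K as [|K IH]; [now rewrite !sum_O|].
  rewrite !sum_Sn, IH. change plus with Cplus. now rewrite Cplus_conj.
Qed.

Lemma sum_n_C1 (K : nat) : sum_n (fun _ => RtoC 1) K = RtoC (INR (S K)).
Proof.
  induction K as [|K IH]; [now rewrite sum_O|].
  rewrite sum_Sn, IH. change plus with Cplus. now rewrite (S_INR (S K)), RtoC_plus.
Qed.

Lemma sum_n_Cmult_l (c : C) (u : nat -> C) (n : nat) :
  sum_n (fun k => (c * u k)%C) n = (c * sum_n u n)%C.
Proof. apply (sum_n_mult_l (K := C_Ring)). Qed.

Definition sum_roots (K : nat) (F : C -> C) : C := sum_n (fun k => F (root_unity K ^ k)%C) K.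

Lemma sum_roots_ext (K : nat) (F G : C -> C) :
  (forall k, F (root_unity K ^ k)%C = G (root_unity K ^ k)%C) -> sum_roots K F = sum_roots K G.
Proof. intros H. now apply sum_n_ext. Qed.

Lemma sum_roots_plus (K : nat) (F G : C -> C) :
  sum_roots K (fun x => F x + G x)%C = (sum_roots K F + sum_roots K G)%C.
Proof.
  apply (sum_n_plus (fun k => F (root_unity K ^ k)%C) (fun k => G (root_unity K ^ k)%C)).
Qed.

Lemma sum_roots_scal (K : nat) (c : C) (F : C -> C) :
  sum_roots K (fun x => c * F x)%C = (c * sum_roots K F)%C.
Proof. apply sum_n_Cmult_l. Qed.

Lemma sum_roots_pow (K d : nat) : (0 < d < S K)%nat -> sum_roots K (fun x => x ^ d)%C = 0.
Proof.
  intros Hd. unfold sum_roots.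
  rewrite (sum_n_ext _ (fun k => (root_unity K ^ d) ^ k)%C)
    by (intros k; now rewrite <- !Cpow_mult_r, Nat.mul_comm).
  pose proof (Cgeom_sum (root_unity K ^ d) K) as G.
  rewrite <- Cpow_mult_r, Nat.mul_comm, Cpow_mult_r, root_unity_pow_order, Cpow_1_l in G.
  assert (Hne : (root_unity K ^ d - 1)%C <> 0).
  { intros E. apply (root_unity_pow_neq1 K d Hd).
    replace (root_unity K ^ d)%C with ((root_unity K ^ d - 1) + 1)%C by ring. rewrite E. ring. }
  set (S := sum_n (fun k => (root_unity K ^ d) ^ k)%C K) in *.
  replace S with (/ (root_unity K ^ d - 1) * ((root_unity K ^ d - 1) * S))%C.
  - rewrite G. ring.
  - rewrite Cmult_assoc, Cinv_l by exact Hne. ring.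
Qed.

Lemma unit_pow_mul_conj_pow (x : C) (m l : nat) : (x * Cconj x)%C = 1 -> (l <= m)%nat ->
  (x ^ m * Cconj x ^ l)%C = (x ^ (m - l))%C.
Proof.
  intros Hx Hlm. replace m with ((m - l) + l)%nat at 1 by lia.
  rewrite Cpow_add_r, <- Cmult_assoc, <- Cpow_mult_l, Hx, Cpow_1_l. ring.
Qed.

Lemma sum_roots_monomial (K m l : nat) : (m < S K)%nat -> (l < S K)%nat ->
  sum_roots K (fun x => x ^ m * Cconj x ^ l)%C = if (m =? l)%nat then RtoC (INR (S K)) else 0.
Proof.
  intros Hm Hl.
  assert (Hunit : forall k, (root_unity K ^ k * Cconj (root_unity K ^ k))%C = 1)
    by (intros k; rewrite root_unity_pow; apply cis_mul_conj).
  destruct (Nat.eqb_spec m l) as [<-|Hne].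
  - rewrite (sum_roots_ext K _ (fun _ => RtoC 1)); [apply sum_n_C1|].
    intros k. rewrite unit_pow_mul_conj_pow, Nat.sub_diag by auto. reflexivity.
  - destruct (Compare_dec.le_lt_dec l m) as [Hlm|Hml].
    + rewrite (sum_roots_ext K _ (fun x => x ^ (m - l))%C)
        by (intros k; now apply unit_pow_mul_conj_pow).
      apply sum_roots_pow. lia.
    + rewrite (sum_roots_ext K _ (fun x => Cconj (x ^ (l - m)))%C).
      * unfold sum_roots. rewrite sum_n_Cconj.
        change (sum_n _ K) with (sum_roots K (fun x => x ^ (l - m))%C).
        rewrite sum_roots_pow by lia. apply injective_projections; simpl; ring.
      * intros k. rewrite <- unit_pow_mul_conj_pow by (auto || lia).
        rewrite Cmult_conj, !Cpow_conj, Cconj_conj. apply Cmult_comm.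
Qed.

Lemma sum_n_kronecker (c : nat -> C) (j l m : nat) :
  sum_n (fun n => if (n + j =? l)%nat then c n else RtoC 0) m =
  if andb (j <=? l) (l - j <=? m)%nat then c (l - j)%nat else RtoC 0.
Proof.
  induction m as [|m IH].
  - rewrite sum_O. simpl.
    destruct (Nat.eqb_spec j l) as [<-|Hjl].
    + now rewrite Nat.leb_refl, Nat.sub_diag.
    + destruct (Nat.leb_spec j l), (Nat.leb_spec (l - j) 0); simpl; try reflexivity; lia.
  - rewrite sum_Sn, IH. change plus with Cplus.
    destruct (Nat.eqb_spec (S m + j) l) as [<-|Hjl].
    + replace (S m + j - j)%nat with (S m) by lia.
      rewrite Nat.leb_refl, (proj2 (Nat.leb_le _ _) (Nat.le_add_l j (S m))).
      replace ((S m <=? m)%nat) with false by (symmetry; apply Nat.leb_gt; lia).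
      simpl. Cring.
    + rewrite Cplus_0_r.
      destruct (Nat.leb_spec j l), (Nat.leb_spec (l - j) m), (Nat.leb_spec (l - j) (S m));
        simpl; try reflexivity; lia.
Qed.

Definition trunc_series (d : nat -> C) (m : nat) (z : C) : C := sum_n (fun n => (d n * z ^ n)%C) m.

Lemma sum_roots_trunc_monomial (d : nat -> C) (r : R) (K m j l : nat) :
  (m + j < S K)%nat -> (l < S K)%nat -> (l - j <= m)%nat ->
  sum_roots K (fun x => trunc_series d m (RtoC r * x) * x ^ j * Cconj x ^ l)%C =
  (INR (S K) * if (j <=? l)%nat then d (l - j)%nat * RtoC r ^ (l - j) else 0)%C.
Proof.
  intros Hmj Hl Hlj. unfold sum_roots, trunc_series.
  rewrite (sum_n_ext _ (fun k => sum_n (fun n => (d n * RtoC r ^ n) *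
             ((root_unity K ^ k) ^ (n + j) * Cconj (root_unity K ^ k) ^ l))%C m)).
  2:{ intros k. rewrite <- Cmult_assoc, Cmult_comm, <- sum_n_Cmult_l.
      apply sum_n_ext. intros n. rewrite Cpow_mult_l, Cpow_add_r. Cring. }
  rewrite (sum_n_switch (G := C_AbelianMonoid)).
  rewrite (sum_n_ext_loc _ (fun n => (RtoC (INR (S K)) *
             if (n + j =? l)%nat then d n * RtoC r ^ n else RtoC 0)%C)).
  2:{ intros n Hn. rewrite sum_n_Cmult_l.
      change (sum_n _ K) with (sum_roots K (fun x => x ^ (n + j) * Cconj x ^ l)%C).
      rewrite sum_roots_monomial by lia.
      destruct (n + j =? l)%nat; Cring. }
  rewrite sum_n_Cmult_l, sum_n_kronecker.
  rewrite (proj2 (Nat.leb_le _ _) Hlj), Bool.andb_true_r.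
  reflexivity.
Qed.

Definition quad (u0 u1 u2 x : C) : C := (u0 + u1 * x + u2 * x ^ 2)%C.

Definition toeplitz_form (d : nat -> C) (r : R) (u0 u1 u2 : C) : C :=
  ((u0 * Cconj u0 + u1 * Cconj u1 + u2 * Cconj u2) * d 0%nat
   + (u0 * Cconj u1 + u1 * Cconj u2) * (d 1%nat * RtoC r)
   + u0 * Cconj u2 * (d 2%nat * RtoC r ^ 2))%C.

Lemma sum_roots_trunc_quad (d : nat -> C) (r : R) (K m : nat) (u0 u1 u2 : C) :
  (2 <= m)%nat -> (m + 2 < S K)%nat ->
  sum_roots K (fun x =>
    trunc_series d m (RtoC r * x) * quad u0 u1 u2 x * Cconj (quad u0 u1 u2 x))%C =
  (INR (S K) * toeplitz_form d r u0 u1 u2)%C.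
Proof.
  intros Hm HK.
  set (P := fun x => trunc_series d m (RtoC r * x)).
  set (T := fun j l x => (P x * x ^ j * Cconj x ^ l)%C).
  rewrite (sum_roots_ext K _ (fun x =>
       u0 * Cconj u0 * T O O x + u0 * Cconj u1 * T O 1%nat x + u0 * Cconj u2 * T O 2%nat x
     + u1 * Cconj u0 * T 1%nat O x + u1 * Cconj u1 * T 1%nat 1%nat x
     + u1 * Cconj u2 * T 1%nat 2%nat x
     + u2 * Cconj u0 * T 2%nat O x + u2 * Cconj u1 * T 2%nat 1%nat x
     + u2 * Cconj u2 * T 2%nat 2%nat x)%C).
  2:{ intros k. unfold T, quad. rewrite !Cplus_conj, !Cmult_conj, !Cpow_conj.
      fold (P (root_unity K ^ k)%C). simpl. ring. }
  rewrite !sum_roots_plus, !sum_roots_scal. unfold T, P.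
  rewrite !sum_roots_trunc_monomial by lia.
  unfold toeplitz_form. simpl. ring.
Qed.

Lemma trunc_series_tail_bound (d : nat -> C) (r : R) (z p : C) (m : nat) :
  Cmod z = r -> ex_series (fun n => Cmod (d n) * r ^ n) ->
  is_series (fun n => (d n * z ^ n)%C) p ->
  Cmod (p - trunc_series d m z) <=
    Series (fun n => Cmod (d n) * r ^ n) - sum_n (fun n => Cmod (d n) * r ^ n) m.
Proof.
  intros Hz Hex Hp.
  set (b := fun n => Cmod (d n) * r ^ n).
  assert (Hb : is_series b (Series b)) by (apply Series_correct; auto).
  apply (is_series_Cmod_le (fun k => (d (S m + k)%nat * z ^ (S m + k))%C)
           (fun k => b (S m + k)%nat)).
  - apply (is_series_incr_n (fun n => (d n * z ^ n)%C) (S m)); [lia|].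
    change (is_series (fun n => (d n * z ^ n)%C) (p - trunc_series d m z + trunc_series d m z)%C).
    replace (p - trunc_series d m z + trunc_series d m z)%C with p by ring.
    exact Hp.
  - apply (is_series_incr_n b (S m)); [lia|].
    change (is_series b (Series b - sum_n b m + sum_n b m)).
    replace (Series b - sum_n b m + sum_n b m) with (Series b) by ring.
    exact Hb.
  - intros n. unfold b. now rewrite Cmod_mult, Cmod_pow, Hz.
Qed.

Lemma Re_mul_Cmod2 (p q : C) : Re (p * q * Cconj q)%C = Re p * Cmod q ^ 2.
Proof.
  rewrite Cmod2_alt. destruct p as [p1 p2], q as [q1 q2]. unfold Cmult, Cconj, Re. simpl. ring.
Qed.

Lemma Re_sum_n_nonneg (u : nat -> C) (K : nat) : (forall k, 0 <= Re (u k)) -> 0 <= Re (sum_n u K).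
Proof.
  intros H. induction K as [|K IH]; [now rewrite sum_O|].
  rewrite sum_Sn. change plus with Cplus. rewrite re_plus. specialize (H (S K)). lra.
Qed.

Lemma Cmod_sum_n_le (u : nat -> C) (K : nat) (c : R) :
  (forall k, Cmod (u k) <= c) -> Cmod (sum_n u K) <= INR (S K) * c.
Proof.
  intros H. rewrite <- sum_n_const.
  eapply Rle_trans; [apply (norm_sum_n_m u 0 K)|]. now apply sum_n_m_le.
Qed.

Lemma Cmod_quad_le (u0 u1 u2 x : C) : Cmod x = 1 ->
  Cmod (quad u0 u1 u2 x) <= Cmod u0 + Cmod u1 + Cmod u2.
Proof.
  intros Hx. unfold quad.
  eapply Rle_trans; [apply Cmod_triangle|].
  eapply Rle_trans; [apply Rplus_le_compat_r, Cmod_triangle|].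
  rewrite !Cmod_mult, Cmod_pow, Hx. simpl. lra.
Qed.

Lemma toeplitz_form_rotation (d : nat -> C) (r : R) (lam : C) : d 0%nat = 1 ->
  Re (toeplitz_form d r 1 ((Cconj (lam * d 1%nat * RtoC r) - d 1%nat * RtoC r) / 2) (- Cconj lam)) =
  (1 + Cmod lam ^ 2) * (1 - r ^ 2 * Cmod (d 1%nat) ^ 2 / 4)
  - r ^ 2 * Re (lam * (d 2%nat - d 1%nat * d 1%nat / 2)).
Proof.
  intros H0. unfold toeplitz_form. rewrite H0, !Cmod2_alt.
  destruct (d 1%nat) as [x y], (d 2%nat) as [p q], lam as [l1 l2].
  cbv beta iota delta [Cdiv Cinv Cmult Cplus Cminus Copp Cconj RtoC Re Im Cpow fst snd].
  field.
Qed.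

Lemma exists_rotation (D : C) : exists lam : C, Cmod lam = 1 /\ Re (lam * D) = Cmod D.
Proof.
  destruct (Req_dec (Cmod D) 0) as [HD|HD].
  - exists 1%C. split; [apply Cmod_1|]. rewrite HD. apply Cmod_eq_0 in HD. rewrite HD. simpl. ring.
  - assert (HDp : 0 < Cmod D) by (pose proof (Cmod_ge_0 D); lra).
    exists (Cconj D * RtoC (/ Cmod D))%C. split.
    + rewrite Cmod_mult, Cmod_conj, Cmod_R, Rabs_pos_eq by (left; now apply Rinv_0_lt_compat).
      now field.
    + replace (Cconj D * RtoC (/ Cmod D) * D)%C with (D * Cconj D * RtoC (/ Cmod D))%C by ring.
      rewrite <- Cmod2_conj, <- RtoC_mult, re_RtoC. now field.
Qed.

Lemma le_of_forall_sq_scaled_le (W c : R) : (forall r, 0 <= r < 1 -> r ^ 2 * W <= c) -> W <= c.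
Proof.
  intros H. assert (Hc : 0 <= c) by (specialize (H 0 ltac:(lra)); simpl in H; lra).
  destruct (Rle_dec W c) as [HW|HW]; [exact HW|exfalso].
  set (e := (W - c) / (4 * W)).
  assert (He : 0 < e <= 1 / 4).
  { unfold e. split; [apply Rdiv_lt_0_compat; lra|].
    apply Rmult_le_reg_r with (4 * W); [lra|].
    replace ((W - c) / (4 * W) * (4 * W)) with (W - c) by (field; lra). lra. }
  specialize (H (1 - e) ltac:(lra)).
  assert (HeW : 2 * e * W = (W - c) / 2) by (unfold e; field; lra).
  assert (0 <= e * e * W) by (apply Rmult_le_pos; nra).
  replace ((1 - e) ^ 2 * W) with (W - 2 * e * W + e * e * W) in H by ring.
  lra.
Qed.

Section BoundedTurning.

Variables (f : C -> C) (a : nat -> C).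
Hypothesis Hf : in_class_R f a.

Lemma toeplitz_form_Re_lower_bound (r : R) (u0 u1 u2 : C) (m : nat) :
  0 <= r < 1 -> (2 <= m)%nat ->
  let b := fun n => Cmod (deriv_coef a n) * r ^ n in
  - ((Series b - sum_n b m) * (Cmod u0 + Cmod u1 + Cmod u2) ^ 2)
    <= Re (toeplitz_form (deriv_coef a) r u0 u1 u2).
Proof.
  intros Hr Hm b.
  assert (Hb : ex_series b)
    by (destruct Hf as [[_ [_ Hs]] _]; exact (ex_series_deriv_coef_abs a f Hs r Hr)).
  set (K := (m + 2)%nat). set (N := INR (S K)).
  assert (HN : 0 < N) by (apply lt_0_INR; lia).
  set (Q := quad u0 u1 u2).
  set (B := (Cmod u0 + Cmod u1 + Cmod u2) ^ 2).
  set (tail := Series b - sum_n b m).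
  assert (Hz : forall k, Cmod (RtoC r * root_unity K ^ k) = r).
  { intros k. rewrite Cmod_mult, Cmod_root_unity_pow, Cmod_R, Rabs_pos_eq; lra. }
  assert (Hzd : forall k, unit_disk (RtoC r * root_unity K ^ k)).
  { intros k. unfold unit_disk. rewrite Hz. lra. }
  set (E := sum_roots K (fun x =>
              (deriv_series a (RtoC r * x) - trunc_series (deriv_coef a) m (RtoC r * x))
              * (Q x * Cconj (Q x)))%C).
  assert (Hsplit : sum_roots K (fun x => deriv_series a (RtoC r * x) * Q x * Cconj (Q x))%C
                   = (N * toeplitz_form (deriv_coef a) r u0 u1 u2 + E)%C).
  { unfold N. rewrite <- (sum_roots_trunc_quad (deriv_coef a) r K m) by lia.
    unfold E. rewrite <- sum_roots_plus.
    apply sum_roots_ext. intros k. unfold Q. Cring. }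
  assert (Hpos : 0 <= Re (sum_roots K (fun x =>
                          deriv_series a (RtoC r * x) * Q x * Cconj (Q x)))%C).
  { apply Re_sum_n_nonneg. intros k. rewrite Re_mul_Cmod2.
    apply Rmult_le_pos; [|apply pow2_ge_0].
    now apply Rlt_le, (deriv_series_spec f a). }
  assert (HE : Cmod E <= N * (tail * B)).
  { apply Cmod_sum_n_le. intros k.
    rewrite Cmod_mult, Cmod_mult, Cmod_conj.
    pose proof (Cmod_quad_le u0 u1 u2 _ (Cmod_root_unity_pow K k)) as HQ. fold Q in HQ.
    assert (HQ0 := Cmod_ge_0 (Q (root_unity K ^ k)%C)).
    apply Rmult_le_compat; [apply Cmod_ge_0|apply Rmult_le_pos; apply Cmod_ge_0| |].
    - apply trunc_series_tail_bound; [apply Hz|exact Hb|].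
      now apply (deriv_series_spec f a).
    - unfold B. simpl. rewrite Rmult_1_r. now apply Rmult_le_compat. }
  rewrite Hsplit, re_plus, re_scal_l in Hpos.
  pose proof (re_le_Cmod E) as HreE. apply Rabs_le_between in HreE.
  fold B tail. apply Rmult_le_reg_l with N; [exact HN|]. nra.
Qed.

Lemma toeplitz_form_Re_nonneg (r : R) (u0 u1 u2 : C) : 0 <= r < 1 ->
  0 <= Re (toeplitz_form (deriv_coef a) r u0 u1 u2).
Proof.
  intros Hr.
  set (b := fun n => Cmod (deriv_coef a n) * r ^ n).
  set (B := (Cmod u0 + Cmod u1 + Cmod u2) ^ 2).
  assert (Hb : is_series b (Series b))
    by (apply Series_correct; destruct Hf as [[_ [_ Hs]] _];
        exact (ex_series_deriv_coef_abs a f Hs r Hr)).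
  assert (Hlim : is_lim_seq (fun m => - ((Series b - sum_n b m) * B)) 0).
  { apply is_lim_seq_ext with (fun m => (sum_n b m - Series b) * B); [intros m; ring|].
    replace (Finite 0) with (Rbar_mult (Series b - Series b) B) by (simpl; f_equal; ring).
    apply is_lim_seq_scal_r, is_lim_seq_minus'; [exact Hb|apply is_lim_seq_const]. }
  set (X := Re (toeplitz_form (deriv_coef a) r u0 u1 u2)).
  change (Rbar_le 0 X).
  apply (is_lim_seq_le_loc (fun m => - ((Series b - sum_n b m) * B)) (fun _ => X) 0 X);
    [|exact Hlim|apply is_lim_seq_const].
  exists 2%nat. intros m Hm. now apply toeplitz_form_Re_lower_bound.
Qed.

Lemma caratheodory_sharp :
  Cmod (deriv_coef a 2 - deriv_coef a 1 * deriv_coef a 1 / 2) + Cmod (deriv_coef a 1) ^ 2 / 2 <= 2.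
Proof.
  set (d := deriv_coef a).
  assert (Hd0 : d 0%nat = 1).
  { destruct Hf as [[_ [H1 _]] _]. unfold d, deriv_coef. rewrite H1. simpl. Cring. }
  destruct (exists_rotation (d 2%nat - d 1%nat * d 1%nat / 2)%C) as [lam [Hlam HD]].
  apply le_of_forall_sq_scaled_le. intros r Hr.
  pose proof (toeplitz_form_Re_nonneg r 1
                ((Cconj (lam * d 1%nat * RtoC r) - d 1%nat * RtoC r) / 2) (- Cconj lam) Hr) as H.
  fold d in H. rewrite toeplitz_form_rotation, Hlam, HD in H by exact Hd0.
  nra.
Qed.

End BoundedTurning.

Lemma logcoef_real_bounds (x dl g2 : R) : 0 <= x -> 0 <= dl -> dl + x ^ 2 / 2 <= 2 -> 0 <= g2 ->
  Rabs (g2 - x ^ 2 / 48) <= dl / 6 -> - (1 / sqrt 5) <= g2 - x / 4 <= 1 / 3.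
Proof.
  intros Hx Hdl Hc Hg2 Hg. apply Rabs_le_between in Hg.
  set (s := sqrt 5).
  assert (Hs : s * s = 5) by (apply sqrt_sqrt; lra).
  assert (Hs0 : 0 < s) by (apply sqrt_lt_R0; lra).
  assert (Hs3 : s < 3) by nra.
  assert (Hinv : 1 / s = s / 5) by (field_simplify; [rewrite <- Hs; field|]; lra).
  split; [rewrite Hinv|nra].
  destruct (Rle_dec (x * s) 4) as [Hxs|Hxs].
  - nra.
  - (* for [x s >= 4] the lower bound [g2 >= (5 x^2 - 16) / 48] takes over *)
    assert (Hprod : 0 <= (x * s - 4) * (5 * x * s + 20 - 12 * s)) by (apply Rmult_le_pos; nra).
    replace ((x * s - 4) * (5 * x * s + 20 - 12 * s))
      with (5 * x ^ 2 * (s * s) - 12 * x * (s * s) - 80 + 48 * s) in Hprod by ring.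
    rewrite Hs in Hprod. nra.
Qed.

Lemma gamma1_deriv_coef (a : nat -> C) : gamma1 a = (deriv_coef a 1 / 4)%C.
Proof.
  unfold gamma1, deriv_coef. replace (INR 2) with 2 by (simpl; ring).
  destruct (a 2%nat) as [x y].
  unfold Cdiv, Cinv, Cmult, RtoC. simpl. apply injective_projections; simpl; field.
Qed.

Lemma gamma2_deriv_coef (a : nat -> C) : gamma2 a =
  ((deriv_coef a 2 - deriv_coef a 1 * deriv_coef a 1 / 2) / 6
   + deriv_coef a 1 * deriv_coef a 1 / 48)%C.
Proof.
  unfold gamma2, deriv_coef. replace (INR 2) with 2 by (simpl; ring).
  replace (INR 3) with 3 by (simpl; ring).
  destruct (a 2%nat) as [x y], (a 3%nat) as [p q].
  unfold Cdiv, Cinv, Cmult, Cplus, Cminus, Copp, RtoC. simpl.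
  apply injective_projections; simpl; field.
Qed.

Lemma logcoef_diff_bounds (f : C -> C) (a : nat -> C) : in_class_R f a ->
  - (1 / sqrt 5) <= logcoef_diff a <= 1 / 3.
Proof.
  intros Hf. unfold logcoef_diff.
  rewrite gamma1_deriv_coef, gamma2_deriv_coef.
  set (c1 := deriv_coef a 1). set (D := (deriv_coef a 2 - c1 * c1 / 2)%C).
  assert (Hnz : forall k : R, k <> 0 -> RtoC k <> 0)
    by (intros k Hk E; apply Hk; exact (f_equal fst E)).
  rewrite Cmod_div by (apply Hnz; lra).
  rewrite Cmod_R, Rabs_pos_eq by lra.
  apply (logcoef_real_bounds (Cmod c1) (Cmod D)).
  - apply Cmod_ge_0.
  - apply Cmod_ge_0.
  - apply (caratheodory_sharp f a Hf).
  - apply Cmod_ge_0.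
  - assert (Hc1 : Cmod (c1 * c1 / 48) = Cmod c1 ^ 2 / 48).
    { rewrite Cmod_div, Cmod_mult, Cmod_R, Rabs_pos_eq by (try apply Hnz; lra). field. }
    rewrite <- Hc1.
    eapply Rle_trans; [apply (norm_triangle_inv (V := C_NormedModule))|].
    change norm with Cmod. change minus with Cminus.
    replace (D / 6 + c1 * c1 / 48 - c1 * c1 / 48)%C with (D / 6)%C by Cring.
    rewrite Cmod_div, Cmod_R, Rabs_pos_eq by (try apply Hnz; lra). lra.
Qed.

Lemma is_series_Cgeom (q : C) : Cmod q < 1 -> is_series (fun n => q ^ n)%C (/ (1 - q))%C.
Proof.
  intros Hq.
  destruct (ex_series_le (V := C_CompleteNormedModule) (fun n => q ^ n)%C (fun n => Cmod q ^ n))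
    as [l Hl].
  { intros n. change norm with Cmod. rewrite Cmod_pow. apply Rle_refl. }
  { apply ex_series_geom. rewrite Rabs_pos_eq; [exact Hq|apply Cmod_ge_0]. }
  revert l Hl. change (forall l : C, is_series (fun n => q ^ n)%C l ->
                        is_series (fun n => q ^ n)%C (/ (1 - q))%C). intros l Hl.
  assert (Hshift : is_series (fun n => q ^ S n)%C (l - 1)%C).
  { apply (is_series_incr_1 (fun n => q ^ n)%C). change plus with Cplus.
    replace (l - 1 + q ^ 0)%C with l by (simpl; ring). exact Hl. }
  assert (Hscal : is_series (fun n => q ^ S n)%C (q * l)%C).
  { apply (is_series_ext (fun n => scal q (q ^ n)%C)); [intros n; now rewrite Cpow_S|].
    exact (is_series_scal (K := C_AbsRing) q _ _ Hl). }
  assert (E : (l - 1)%C = (q * l)%C)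
    by exact (filterlim_locally_unique (K := C_AbsRing) (V := C_NormedModule) _ _ _ Hshift Hscal).
  assert (Hq1 : (1 - q)%C <> 0).
  { intros H. assert (Hq' : q = 1%C) by (replace q with (1 - (1 - q))%C by ring; rewrite H; ring).
    rewrite Hq', Cmod_1 in Hq. lra. }
  replace l with (/ (1 - q) * ((1 - q) * l))%C in Hl
    by (rewrite Cmult_assoc, Cinv_l by exact Hq1; ring).
  assert (El : ((1 - q) * l)%C = RtoC 1)
    by (replace ((1 - q) * l)%C with (l - q * l)%C by ring; rewrite <- E; ring).
  now rewrite El, Cmult_1_r in Hl.
Qed.

Lemma Re_inv_one_sub_gt (w : C) : Cmod w < 1 -> 1 / 2 < Re (/ (1 - w))%C.
Proof.
  intros Hw. pose proof (Cmod2_alt w) as E.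
  assert (Hw2 : Cmod w ^ 2 < 1) by (pose proof (Cmod_ge_0 w); nra).
  destruct w as [x y]. simpl in E.
  unfold Cinv, Cminus, Cplus, Copp, RtoC, Re. simpl.
  match goal with |- _ < ?p / ?q =>
    assert (Hd : 0 < q) by nra;
    apply Rmult_lt_reg_r with q; [exact Hd|];
    replace (p / q * q) with p by (field; lra)
  end.
  nra.
Qed.

Definition delta0 (n : nat) : C := match n with O => 1 | S _ => 0 end.

Lemma is_series_delta0 : is_series delta0 (RtoC 1).
Proof.
  assert (H : forall n, sum_n delta0 n = RtoC 1).
  { induction n as [|n IH]; [now rewrite sum_O|].
    rewrite sum_Sn, IH. change plus with Cplus. simpl. Cring. }
  apply filterlim_ext with (fun _ => RtoC 1); [intros n; now rewrite H|apply filterlim_const].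
Qed.

(* The coefficients of the [f] with [f'(z) = 1 / (1 - e1 z) + 1 / (1 - e2 z) - 1]. *)
Definition extremal_coef (e1 e2 : C) (n : nat) : C :=
  match n with
  | O => 0
  | S k => ((e1 ^ k + e2 ^ k - delta0 k) * RtoC (/ INR (S k)))%C
  end.

Definition extremal_fun (e1 e2 : C) (z : C) : C :=
  CSeries (fun n => (extremal_coef e1 e2 n * z ^ n)%C).

Section Extremal.

Variables e1 e2 : C.
Hypotheses (He1 : Cmod e1 = 1) (He2 : Cmod e2 = 1).

Lemma Cmod_extremal_coef_le (n : nat) : Cmod (extremal_coef e1 e2 n) <= 3.
Proof.
  destruct n as [|k]; cbn [extremal_coef]; [rewrite Cmod_0; lra|].
  assert (Hk : 1 <= INR (S k)) by (rewrite S_INR; pose proof (pos_INR k); lra).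
  assert (Hi : 0 < / INR (S k) <= 1).
  { split; [apply Rinv_0_lt_compat; lra|]. rewrite <- Rinv_1. apply Rinv_le_contravar; lra. }
  assert (Hd : Cmod (delta0 k) <= 1) by (destruct k; simpl; [rewrite Cmod_1|rewrite Cmod_0]; lra).
  assert (HX : Cmod (e1 ^ k + e2 ^ k - delta0 k) <= 3).
  { unfold Cminus. eapply Rle_trans; [apply Cmod_triangle|]. rewrite Cmod_opp.
    eapply Rle_trans; [apply Rplus_le_compat_r, Cmod_triangle|].
    rewrite !Cmod_pow, He1, He2, pow1. lra. }
  rewrite Cmod_mult, Cmod_R, Rabs_pos_eq by lra.
  apply Rle_trans with (Cmod (e1 ^ k + e2 ^ k - delta0 k) * 1); [|lra].
  apply Rmult_le_compat_l; [apply Cmod_ge_0|lra].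
Qed.

Lemma is_series_extremal_fun (z : C) : unit_disk z ->
  is_series (fun n => (extremal_coef e1 e2 n * z ^ n)%C) (extremal_fun e1 e2 z).
Proof.
  intros Hz. unfold unit_disk in Hz.
  assert (Hex : ex_series (fun n => (extremal_coef e1 e2 n * z ^ n)%C)).
  { apply (ex_series_le (V := C_CompleteNormedModule) _ (fun n => 3 * Cmod z ^ n)).
    - intros n. change norm with Cmod. rewrite Cmod_mult, Cmod_pow.
      apply Rmult_le_compat_r; [apply pow_le, Cmod_ge_0|apply Cmod_extremal_coef_le].
    - apply (ex_series_scal_l (K := R_AbsRing) (V := R_NormedModule) 3 (fun n => Cmod z ^ n)).
      apply ex_series_geom. rewrite Rabs_pos_eq; [exact Hz|apply Cmod_ge_0]. }
  destruct Hex as [l Hl]. unfold extremal_fun. now rewrite (CSeries_correct _ _ Hl).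
Qed.

Lemma deriv_coef_extremal (n : nat) :
  deriv_coef (extremal_coef e1 e2) n = (e1 ^ n + e2 ^ n - delta0 n)%C.
Proof.
  unfold deriv_coef. cbn [extremal_coef].
  rewrite Cmult_comm, <- Cmult_assoc, <- RtoC_mult, Rinv_l by (apply not_0_INR; lia). Cring.
Qed.

Lemma extremal_in_class_R : in_class_R (extremal_fun e1 e2) (extremal_coef e1 e2).
Proof.
  split; [split; [reflexivity|split]|].
  - simpl. rewrite Rinv_1. Cring.
  - exact is_series_extremal_fun.
  - intros z Hz.
    assert (Hm1 : Cmod (e1 * z) < 1) by (rewrite Cmod_mult, He1; unfold unit_disk in Hz; lra).
    assert (Hm2 : Cmod (e2 * z) < 1) by (rewrite Cmod_mult, He2; unfold unit_disk in Hz; lra).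
    set (p := (/ (1 - e1 * z) + / (1 - e2 * z) - 1)%C).
    exists p. split.
    + apply (is_derive_power_series _ _ is_series_extremal_fun z p Hz).
      pose proof (is_series_minus _ _ _ _
                    (is_series_plus _ _ _ _ (is_series_Cgeom _ Hm1) (is_series_Cgeom _ Hm2))
                    is_series_delta0) as G.
      refine (is_series_ext _ _ _ _ G).
      intros n. rewrite deriv_coef_extremal, !Cpow_mult_l.
      change plus with Cplus. change opp with Copp.
      destruct n; simpl; Cring.
    + unfold p. unfold Cminus at 1. rewrite !re_plus, re_opp, re_RtoC.
      pose proof (Re_inv_one_sub_gt _ Hm1). pose proof (Re_inv_one_sub_gt _ Hm2). lra.
Qed.

End Extremal.

Lemma logcoef_diff_extremal_upper : logcoef_diff (extremal_coef 1 (-1)) = 1 / 3.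
Proof.
  unfold logcoef_diff.
  replace (gamma1 (extremal_coef 1 (-1))) with (RtoC 0)
    by (unfold gamma1, extremal_coef, delta0; replace (INR 2) with 2 by (simpl; ring);
        apply injective_projections; simpl; field).
  replace (gamma2 (extremal_coef 1 (-1))) with (RtoC (1 / 3))
    by (unfold gamma2, extremal_coef, delta0; replace (INR 2) with 2 by (simpl; ring);
        replace (INR 3) with 3 by (simpl; ring); apply injective_projections; simpl; field).
  rewrite !Cmod_R, Rabs_R0, Rabs_pos_eq by lra. ring.
Qed.

Definition rot5 : C := (2 / sqrt 5, 1 / sqrt 5).

Lemma Cmod_rot5 : Cmod rot5 = 1.
Proof.
  assert (Hs : sqrt 5 * sqrt 5 = 5) by (apply sqrt_sqrt; lra).
  assert (0 < sqrt 5) by (apply sqrt_lt_R0; lra).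
  unfold Cmod, rot5. simpl. transitivity (sqrt 1); [f_equal|apply sqrt_1].
  replace (2 / sqrt 5 * (2 / sqrt 5 * 1) + 1 / sqrt 5 * (1 / sqrt 5 * 1))
    with (5 / (sqrt 5 * sqrt 5)) by (field; lra).
  rewrite Hs. field.
Qed.

(* Here [gamma2] vanishes and [gamma1 = 1 / sqrt 5]. *)
Lemma logcoef_diff_extremal_lower :
  logcoef_diff (extremal_coef rot5 (Cconj rot5)) = - (1 / sqrt 5).
Proof.
  unfold rot5. set (s := sqrt 5).
  assert (Hs : s * s = 5) by (apply sqrt_sqrt; lra).
  assert (Hs0 : 0 < s) by (apply sqrt_lt_R0; lra).
  unfold logcoef_diff.
  replace (gamma1 (extremal_coef (2 / s, 1 / s) (Cconj (2 / s, 1 / s)))) with (RtoC (1 / s))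
    by (unfold gamma1, extremal_coef, delta0; replace (INR 2) with 2 by (simpl; ring);
        apply injective_projections; simpl; field; lra).
  replace (gamma2 (extremal_coef (2 / s, 1 / s) (Cconj (2 / s, 1 / s)))) with (RtoC 0).
  - rewrite !Cmod_R, Rabs_R0, Rabs_pos_eq by (apply Rlt_le, Rdiv_lt_0_compat; lra). ring.
  - unfold gamma2, extremal_coef, delta0. replace (INR 2) with 2 by (simpl; ring).
    replace (INR 3) with 3 by (simpl; ring).
    apply injective_projections; simpl; field_simplify; try lra; nra.
Qed.

Theorem mainTheorem8 :
  (forall (f : C -> C) (a : nat -> C), in_class_R f a ->
     - (1 / sqrt 5) <= logcoef_diff a /\ logcoef_diff a <= 1 / 3)
  /\ (exists (f : C -> C) (a : nat -> C), in_class_R f a /\ logcoef_diff a = 1 / 3)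
  /\ (exists (f : C -> C) (a : nat -> C), in_class_R f a /\ logcoef_diff a = - (1 / sqrt 5)).
Proof.
  split; [exact logcoef_diff_bounds|split].
  - exists (extremal_fun 1 (-1)), (extremal_coef 1 (-1)).
    split; [|exact logcoef_diff_extremal_upper].
    apply extremal_in_class_R; rewrite Cmod_R; unfold Rabs; destruct Rcase_abs; lra.
  - exists (extremal_fun rot5 (Cconj rot5)), (extremal_coef rot5 (Cconj rot5)).
    split; [|exact logcoef_diff_extremal_lower].
    apply extremal_in_class_R; [|rewrite Cmod_conj]; exact Cmod_rot5.
Qed.
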